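(* In the self-confidence game described in the context, every profile $z\in[0,1]^n$ such that (i) $|\mathcal S(z)|=2$, where $\mathcal S(z)=\{i\in\mathcal V: z_i=1\}$, and (ii) $\sigma_j^2\le\sigma_i^2$ for every $j\in\mathcal S(z)$ and every $i\in\mathcal V$, is a Nash equilibrium that is not strict.
   Context: Let $n\ge2$ and $\mathcal V=\{1,\dots,n\}$. Let $P\in\mathbb{R}^{n\times n}$ be a row-stochastic, irreducible, aperiodic matrix (the graph on $\mathcal V$ with edge $(i,j)$ iff $P_{ij}>0$ is strongly connected with gcd of cycle lengths $1$). For $z\in[0,1]^n$, $W(z)=(I-[z])P+[z]$ ($[z]$ the diagonal matrix with diagonal $z$) and $H(z)=\lim_{t\to\infty}W(z)^t$ (the limit exists and is row-stochastic). Let $\sigma_1^2,\dots,\sigma_n^2>0$. Agent $i$'s cost is $\upsilon_i(z)=\sum_jH_{ij}(z)^2\sigma_j^2$; the game has players $\mathcal V$, action sets $[0,1]$, each player minimizing her cost. Nash equilibrium: for all $i$, $\bar z_i\in[0,1]$, $\upsilon_i(z_i,z_{-i})\le\upsilon_i(\bar z_i,z_{-i})$; strict Nash equilibrium: strict inequality whenever $\bar z_i\ne z_i$. *)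

From HB Require Import structures.
From mathcomp Require Import all_boot all_order all_algebra.
From mathcomp Require Import all_classical all_reals topology normedtype sequences.
Set Implicit Arguments. Unset Strict Implicit. Unset Printing Implicit Defensive.
Import Order.TTheory GRing.Theory Num.Theory.
Import numFieldNormedType.Exports.
Local Open Scope ring_scope.

Section SelfConfidence.
Variables (R : realType) (n : nat).

Definition row_stochastic (P : 'M[R]_n) : Prop :=
  (forall i j, 0 <= P i j) /\ (forall i, \sum_(j < n) P i j = 1).

Definition edge (P : 'M[R]_n) : rel 'I_n := fun i j => 0 < P i j.

Definition irreducible (P : 'M[R]_n) : Prop :=
  forall i j : 'I_n, connect (edge P) i j.

Definition closed_walk_length (P : 'M[R]_n) (k : nat) : Prop :=
  exists (i : 'I_n) (s : seq 'I_n),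
    size s = k /\ path (edge P) i s /\ last i s = i.

Definition aperiodic (P : 'M[R]_n) : Prop :=
  forall d : nat,
    (forall k, (0 < k)%N -> closed_walk_length P k -> (d %| k)%N) -> d = 1%N.

Definition diagz (z : 'I_n -> R) : 'M[R]_n := \matrix_(i, j) (z i *+ (i == j)).

Definition Wmat (P : 'M[R]_n) (z : 'I_n -> R) : 'M[R]_n :=
  (1%:M - diagz z) *m P + diagz z.

Definition mxpow (A : 'M[R]_n) (t : nat) : 'M[R]_n := iter t (mulmx A) 1%:M.

Definition Hmat (P : 'M[R]_n) (z : 'I_n -> R) : 'M[R]_n :=
  \matrix_(i, j) limn (fun t : nat => mxpow (Wmat P z) t i j : R).

Definition cost (P : 'M[R]_n) (s2 : 'I_n -> R) (z : 'I_n -> R) (i : 'I_n) : R :=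
  \sum_(j < n) (Hmat P z i j) ^+ 2 * s2 j.

Definition deviate (z : 'I_n -> R) (i : 'I_n) (a : R) : 'I_n -> R :=
  fun k => if k == i then a else z k.

Definition in01 (a : R) : Prop := 0 <= a /\ a <= 1.

Definition profile (z : 'I_n -> R) : Prop := forall i, in01 (z i).

Definition nash (P : 'M[R]_n) (s2 : 'I_n -> R) (z : 'I_n -> R) : Prop :=
  profile z /\
  forall (i : 'I_n) (a : R), in01 a -> cost P s2 z i <= cost P s2 (deviate z i a) i.

Definition strict_nash (P : 'M[R]_n) (s2 : 'I_n -> R) (z : 'I_n -> R) : Prop :=
  profile z /\
  forall (i : 'I_n) (a : R), in01 a -> a != z i ->
    cost P s2 z i < cost P s2 (deviate z i a) i.

Definition stubborn (z : 'I_n -> R) : {set 'I_n} := [set i | z i == 1].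

End SelfConfidence.

From mathcomp Require Import all_boot all_order all_algebra.
From mathcomp Require Import all_classical all_reals topology normedtype sequences.
From mathcomp Require Import ring.
Import Order.TTheory GRing.Theory Num.Theory.
Import numFieldNormedType.Exports.
Local Open Scope classical_set_scope.
Local Open Scope ring_scope.

(* Call agent s stubborn when z_s = 1: row s of W(z) is then the unit row e_s.
   Hence the columns of W(z)^t at stubborn agents are nondecreasing and bounded,
   and the mass that W(z)^t puts on non-stubborn agents converges to a
   W(z)-harmonic function vanishing on the stubborn set S(z).  Off S(z),
   W(z)-harmonic means P-harmonic, so by irreducibility and the maximum principle
   this limit is 0.  Thus H(z) exists, is row-stochastic, is supported on the
   columns of S(z), has unit rows on S(z) and is fixed by W(z); in particular it
   only depends on S(z): if S(z') = S(z) then W(z) fixes H(z'), whence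
   H(z') = H(z) H(z') = H(z).

   With S(z) = {x, y}, a stubborn agent pays her own variance, so becoming
   stubborn costs agent i sigma_i^2, while she currently pays at most
   sum_j H_ij(z) sigma_j^2, an average of stubborn variances.  A non-stubborn
   agent who stays non-stubborn does not change S(z), hence nor her cost.  If x
   gives up stubbornness, S becomes {y}, so H_x = e_y and her cost becomes
   sigma_y^2 >= sigma_x^2; by minimality sigma_x^2 = sigma_y^2, so this
   deviation is a tie and the equilibrium is not strict. *)

Section Stochastic.
Context {R : realType} {n : nat}.
Implicit Types (A B : 'M[R]_n) (v : 'I_n -> R).

Lemma sumr_delta_l (f : 'I_n -> R) i : \sum_k (i == k)%:R * f k = f i.
Proof.
rewrite (bigD1 i) //= big1 => [|k /negbTE ki]; first by rewrite eqxx mul1r addr0.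
by rewrite eq_sym ki mul0r.
Qed.

Lemma sumr_delta_r (f : 'I_n -> R) j : \sum_k f k * (k == j)%:R = f j.
Proof. by under eq_bigr do rewrite mulrC eq_sym; exact: sumr_delta_l. Qed.

Lemma row_stochastic1 : row_stochastic (1%:M : 'M[R]_n).
Proof.
split=> [i j|i]; first by rewrite mxE ler0n.
by under eq_bigr do rewrite mxE -[_%:R]mulr1; rewrite sumr_delta_l.
Qed.

Lemma row_stochastic_mul A B :
  row_stochastic A -> row_stochastic B -> row_stochastic (A *m B).
Proof.
move=> [A_ge0 A_row] [B_ge0 B_row]; split=> [i j|i].
  by rewrite mxE sumr_ge0 // => k _; rewrite mulr_ge0.
under eq_bigr do rewrite mxE.
by rewrite exchange_big /=; under eq_bigr do rewrite -mulr_sumr B_row mulr1.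
Qed.

Lemma row_stochastic_le1 A i j : row_stochastic A -> A i j <= 1.
Proof.
move=> [A_ge0 A_row]; rewrite -(A_row i) (bigD1 j) //= lerDl.
by rewrite sumr_ge0.
Qed.

Lemma mxpowS A t : mxpow A t.+1 = A *m mxpow A t.
Proof. by []. Qed.

Lemma mxpowSr A t : mxpow A t.+1 = mxpow A t *m A.
Proof.
elim: t => [|t IH]; first by rewrite /mxpow /= mulmx1 mul1mx.
by rewrite [LHS]mxpowS IH mulmxA -IH.
Qed.

Lemma row_stochastic_mxpow A t : row_stochastic A -> row_stochastic (mxpow A t).
Proof.
move=> A_st; elim: t => [|t IH]; first exact: row_stochastic1.
by rewrite mxpowS; exact: row_stochastic_mul.
Qed.

Lemma harmonic_max_edge A v x y : row_stochastic A ->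
  (forall k, v k <= v x) -> \sum_k A x k * v k = v x -> edge A x y -> v y = v x.
Proof.
move=> [A_ge0 A_row] v_le harm Axy.
have gap0 : \sum_k A x k * (v x - v k) = 0.
  under eq_bigr do rewrite mulrBr.
  by rewrite sumrB -mulr_suml A_row mul1r harm subrr.
have terms_ge0 k : true -> 0 <= A x k * (v x - v k) by rewrite mulr_ge0 ?subr_ge0.
have /eqP : A x y * (v x - v y) = 0 := psumr_eq0P terms_ge0 gap0 isT.
by rewrite mulf_eq0 (gt_eqF Axy) subr_eq0 => /eqP.
Qed.

Lemma irreducible_maximum_principle A v s :
  row_stochastic A -> irreducible A ->
  (forall x, v s < v x -> \sum_k A x k * v k = v x) -> forall x, v x <= v s.
Proof.
move=> A_st A_irr harm.
have [m _ m_max] := @arg_maxP _ _ _ s xpredT v isT.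
suff vm_le : v m <= v s by move=> x; exact: le_trans (m_max x isT) vm_le.
rewrite leNgt; apply/negP => vs_lt.
have path_max p x : v x = v m -> path (edge A) x p -> v (last x p) = v m.
  elim: p x => [|y p IHp] x //= vx /andP[Axy p_path]; apply: IHp p_path.
  rewrite -vx; apply: harmonic_max_edge Axy => //; first by move=> k; rewrite vx; exact: m_max.
  by apply: harm; rewrite vx.
have /connectP[p p_path s_last] := A_irr m s.
by move: vs_lt; rewrite s_last path_max // ltxx.
Qed.

Lemma cvg_sumr {I : finType} {Q : pred I} {f : I -> nat -> R} {l : I -> R} :
  (forall i, Q i -> f i t @[t --> \oo] --> l i) ->
  \sum_(i | Q i) f i t @[t --> \oo] --> \sum_(i | Q i) l i.
Proof. by move=> fl; apply: cvg_big => //; exact: add_continuous. Qed.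

Lemma cvg_mulmxl {A : nat -> 'M[R]_n} {L : 'M[R]_n} (M : 'M[R]_n) i j :
  (forall i j, A t i j @[t --> \oo] --> L i j) ->
  (A t *m M) i j @[t --> \oo] --> (L *m M) i j.
Proof.
move=> AL; rewrite mxE; under eq_fun do rewrite mxE.
by apply: cvg_sumr => k _; apply: cvgMr_tmp.
Qed.

Lemma cvg_mulmxr {A : nat -> 'M[R]_n} {L : 'M[R]_n} (M : 'M[R]_n) i j :
  (forall i j, A t i j @[t --> \oo] --> L i j) ->
  (M *m A t) i j @[t --> \oo] --> (M *m L) i j.
Proof.
move=> AL; rewrite mxE; under eq_fun do rewrite mxE.
by apply: cvg_sumr => k _; apply: cvgMl_tmp.
Qed.

End Stochastic.

Lemma mix_fixedE {R : idomainType} (a x y : R) :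
  a != 1 -> ((1 - a) * x + a * y == y) = (x == y).
Proof.
move=> a1; have -> : (1 - a) * x + a * y = (1 - a) * (x - y) + y by ring.
by rewrite -subr_eq0 addrK mulf_eq0 subr_eq0 eq_sym (negbTE a1) subr_eq0.
Qed.

Section Wmat.
Context {R : realType} {n : nat}.
Implicit Types (P : 'M[R]_n) (z : 'I_n -> R).

Lemma Wmat_entry P z k l : Wmat P z k l = (1 - z k) * P k l + z k * (k == l)%:R.
Proof.
rewrite /Wmat.
have -> : diagz z = diag_mx (\row_i z i) by apply/matrixP => i j; rewrite !mxE.
by rewrite mulmxBl mul1mx mul_diag_mx !mxE mulrBl mul1r mulr_natr.
Qed.

Lemma Wmat_sumE P z (f : 'I_n -> R) k :
  \sum_l Wmat P z k l * f l = (1 - z k) * (\sum_l P k l * f l) + z k * f k.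
Proof.
under eq_bigr do rewrite Wmat_entry mulrDl -!mulrA.
by rewrite big_split /= -!mulr_sumr sumr_delta_l.
Qed.

Lemma Wmat_mulE P z (M : 'M[R]_n) k j :
  (Wmat P z *m M) k j = (1 - z k) * (P *m M) k j + z k * M k j.
Proof. by rewrite !mxE Wmat_sumE. Qed.

Lemma Wmat_stubborn_row P z s j : z s = 1 -> Wmat P z s j = (s == j)%:R.
Proof. by move=> zs; rewrite Wmat_entry zs subrr mul0r add0r mul1r. Qed.

Lemma mxpow_stubborn_row P z s j t :
  z s = 1 -> mxpow (Wmat P z) t s j = (s == j)%:R.
Proof.
move=> zs; elim: t j => [|t IH] j; first by rewrite /mxpow /= mxE.
by rewrite mxpowS mxE; under eq_bigr do rewrite Wmat_stubborn_row //; rewrite sumr_delta_l IH.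
Qed.

Lemma Hmat_stubborn_row P z s j : z s = 1 -> Hmat P z s j = (s == j)%:R.
Proof.
move=> zs; rewrite mxE.
under eq_fun do rewrite mxpow_stubborn_row //.
exact: lim_cst.
Qed.

Lemma row_stochastic_Wmat P z : row_stochastic P -> profile z -> row_stochastic (Wmat P z).
Proof.
move=> [P_ge0 P_row] z01; split=> [i j|i].
  have [zi_ge0 zi_le1] := z01 i.
  by rewrite Wmat_entry addr_ge0 ?mulr_ge0 ?subr_ge0.
under eq_bigr do rewrite -[Wmat _ _ _ _]mulr1.
by rewrite Wmat_sumE; under eq_bigr do rewrite mulr1; rewrite P_row !mulr1 subrK.
Qed.

Lemma Wmat_mul_fixedE P z (M : 'M[R]_n) k j : z k != 1 ->
  ((Wmat P z *m M) k j == M k j) = ((P *m M) k j == M k j).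
Proof. by move=> zk; rewrite Wmat_mulE mix_fixedE. Qed.

Lemma Wmat_mul_fixed_stubborn {P z z'} {M : 'M[R]_n} :
  stubborn z = stubborn z' -> Wmat P z *m M = M -> Wmat P z' *m M = M.
Proof.
move=> S_eq /matrixP WM; apply/matrixP => k j.
move/setP/(_ k): S_eq; rewrite !inE.
have [zk1 /esym/eqP z'k1|zk1 /esym/negbT z'k1] := eqVneq (z k) 1.
  by rewrite Wmat_mulE z'k1 subrr mul0r add0r mul1r.
by apply/eqP; rewrite Wmat_mul_fixedE // -(Wmat_mul_fixedE P z M k j zk1) WM.
Qed.

End Wmat.

Section StubbornLimit.
Context {R : realType} {n : nat}.
Context {P : 'M[R]_n} {z : 'I_n -> R} {s0 : 'I_n}.
Hypotheses (P_st : row_stochastic P) (P_irr : irreducible P) (z01 : profile z).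
Hypothesis zs0 : z s0 = 1.

Local Notation W := (Wmat P z).
Local Notation Wt t := (mxpow (Wmat P z) t).

Let W_st : row_stochastic W := row_stochastic_Wmat P z P_st z01.
Let Wt_st t : row_stochastic (Wt t) := row_stochastic_mxpow W t W_st.

Lemma mxpow_stubborn_col_nondecr i j : z j = 1 -> nondecreasing_seq (fun t => Wt t i j).
Proof.
move=> zj; apply/nondecreasing_seqP => t.
rewrite mxpowSr mxE (bigD1 j) //= Wmat_stubborn_row // eqxx mulr1 lerDl.
by rewrite sumr_ge0 // => k _; rewrite mulr_ge0 //; [exact: (Wt_st t).1 | exact: W_st.1].
Qed.

Lemma cvgn_mxpow_stubborn_col i j : z j = 1 -> cvgn (fun t => Wt t i j).
Proof.
move=> zj; apply: nondecreasing_is_cvgn; first exact: mxpow_stubborn_col_nondecr.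
by exists 1 => _ [t _ <-]; exact: row_stochastic_le1.
Qed.

Definition nonstubborn_mass t i := \sum_(j | z j != 1) Wt t i j.

Lemma nonstubborn_massS t i : nonstubborn_mass t.+1 i = \sum_k W i k * nonstubborn_mass t k.
Proof.
rewrite /nonstubborn_mass mxpowS; under eq_bigr do rewrite mxE.
by rewrite exchange_big /=; apply: eq_bigr => k _; rewrite mulr_sumr.
Qed.

Lemma cvgn_nonstubborn_mass i : cvgn (nonstubborn_mass^~ i).
Proof.
have mass_split t : nonstubborn_mass t i = 1 - \sum_(j | z j == 1) Wt t i j.
  by rewrite -[X in X - _](proj2 (Wt_st t) i) (bigID (fun j => z j == 1)) /= addrAC subrr add0r.
under eq_fun do rewrite mass_split.
apply: cvgP; apply: cvgB; first exact: cvg_cst.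
by apply: cvg_sumr => j /eqP zj; exact: cvgn_mxpow_stubborn_col.
Qed.

Lemma lim_nonstubborn_mass i : limn (nonstubborn_mass^~ i) = 0.
Proof.
pose v k := limn (nonstubborn_mass^~ k).
have v_ge0 k : 0 <= v k.
  apply: (cvgr_to_ge (cvgn_nonstubborn_mass k)); apply: nearW => t.
  by rewrite sumr_ge0 // => j _; exact: (Wt_st t).1.
have v_stubborn s : z s = 1 -> v s = 0.
  move=> zs; rewrite /v; have -> : nonstubborn_mass^~ s = fun=> 0; last exact: lim_cst.
  apply/funext => t; rewrite /nonstubborn_mass big1 // => j zj.
  rewrite mxpow_stubborn_row //; have [sj|//] := eqVneq s j.
  by rewrite -sj zs eqxx in zj.
have v_harmonic k : \sum_l W k l * v l = v k.
  have shifted : nonstubborn_mass t.+1 k @[t --> \oo] --> \sum_l W k l * v l.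
    under eq_fun do rewrite nonstubborn_massS.
    by apply: cvg_sumr => l _; apply: cvgMl_tmp; exact: cvgn_nonstubborn_mass.
  apply: (cvg_unique (@Rhausdorff R) shifted).
  by have := cvgn_nonstubborn_mass k; rewrite -cvg_shiftS.
suff : v i <= v s0 by rewrite (v_stubborn s0) // => vi_le0; apply/le_anti; rewrite vi_le0 v_ge0.
apply: (irreducible_maximum_principle P v s0 P_st P_irr) => x.
rewrite (v_stubborn s0) // => vx_gt0.
have zx1 : z x != 1 by apply/eqP => /v_stubborn vx0; rewrite vx0 ltxx in vx_gt0.
by apply/eqP; rewrite -(mix_fixedE _ _ _ zx1) -Wmat_sumE v_harmonic.
Qed.

Lemma mxpow_nonstubborn_col_cvg0 i j : z j != 1 -> Wt t i j @[t --> \oo] --> 0.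
Proof.
move=> zj; apply: (@squeeze_cvgr _ _ _ _ (fun=> 0) (nonstubborn_mass^~ i)).
- apply: nearW => t; rewrite (Wt_st t).1 /= /nonstubborn_mass (bigD1 j) //= lerDl.
  by rewrite sumr_ge0 // => k _; exact: (Wt_st t).1.
- exact: cvg_cst.
- by rewrite -(lim_nonstubborn_mass i); exact: cvgn_nonstubborn_mass.
Qed.

Lemma Hmat_cvg i j : Wt t i j @[t --> \oo] --> Hmat P z i j.
Proof.
rewrite mxE; have [zj|zj] := eqVneq (z j) 1; first exact: cvgn_mxpow_stubborn_col.
rewrite (cvg_lim (@Rhausdorff R) (mxpow_nonstubborn_col_cvg0 i j zj)).
exact: mxpow_nonstubborn_col_cvg0.
Qed.

Lemma Hmat_nonstubborn_col i j : z j != 1 -> Hmat P z i j = 0.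
Proof.
move=> zj; apply: (cvg_unique (@Rhausdorff R) (Hmat_cvg i j)).
exact: mxpow_nonstubborn_col_cvg0.
Qed.

Lemma row_stochastic_Hmat : row_stochastic (Hmat P z).
Proof.
split=> [i j|i].
  by apply: cvgr_to_ge (Hmat_cvg i j) _; apply: nearW => t; exact: (Wt_st t).1.
apply: (cvg_unique (@Rhausdorff R) (cvg_sumr (fun j _ => Hmat_cvg i j))) => /=.
by under eq_cvg do rewrite (proj2 (Wt_st _)); exact: cvg_cst.
Qed.

Lemma Wmat_mul_Hmat : W *m Hmat P z = Hmat P z.
Proof.
apply/matrixP => i j; apply: (cvg_unique (@Rhausdorff R) (cvg_mulmxr W i j Hmat_cvg)).
by have := Hmat_cvg i j; rewrite -cvg_shiftS.
Qed.

Lemma Hmat_mul_fixed (M : 'M[R]_n) : W *m M = M -> Hmat P z *m M = M.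
Proof.
move=> WM; have Wt_fixed t : Wt t *m M = M.
  by elim: t => [|t IH]; rewrite ?mul1mx // mxpowS -mulmxA IH.
apply/matrixP => i j; apply: (cvg_unique (@Rhausdorff R) (cvg_mulmxl M i j Hmat_cvg)) => /=.
by under eq_cvg do rewrite Wt_fixed; exact: cvg_cst.
Qed.

Lemma Hmat_mul_absorbing (M : 'M[R]_n) :
  (forall s j, z s = 1 -> M s j = (s == j)%:R) -> Hmat P z *m M = Hmat P z.
Proof.
move=> M_abs; apply/matrixP => i j; rewrite mxE -[RHS](sumr_delta_r (Hmat P z i)).
apply: eq_bigr => l _; have [zl|zl] := eqVneq (z l) 1; first by rewrite M_abs.
by rewrite Hmat_nonstubborn_col // !mul0r.
Qed.

End StubbornLimit.

Lemma Hmat_stubborn_eq {R : realType} {n : nat} {P : 'M[R]_n} {z z' : 'I_n -> R} {s0} :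
  row_stochastic P -> irreducible P -> profile z -> profile z' -> z s0 = 1 ->
  stubborn z' = stubborn z -> Hmat P z' = Hmat P z.
Proof.
move=> P_st P_irr z01 z'01 zs0 S_eq.
have stubborn_z' s : z s = 1 -> z' s = 1.
  by move/setP/(_ s): S_eq; rewrite !inE => zs_eq zs; apply/eqP; rewrite zs_eq zs.
have W_Hz' : Wmat P z *m Hmat P z' = Hmat P z'.
  exact: Wmat_mul_fixed_stubborn S_eq (Wmat_mul_Hmat P_st P_irr z'01 (stubborn_z' _ zs0)).
rewrite -(Hmat_mul_fixed P_st P_irr z01 zs0 _ W_Hz').
by apply: (Hmat_mul_absorbing P_st P_irr z01 zs0) => s j /stubborn_z'; exact: Hmat_stubborn_row.
Qed.

Section Costs.
Context {R : realType} {n : nat}.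
Context {P : 'M[R]_n} {s2 : 'I_n -> R}.
Hypotheses (P_st : row_stochastic P) (P_irr : irreducible P).
Implicit Types (z : 'I_n -> R).

Lemma profile_deviate z i a : profile z -> in01 a -> profile (deviate z i a).
Proof. by move=> z01 a01 k; rewrite /deviate; case: (k == i). Qed.

Lemma stubborn_deviate z i a : a != 1 -> stubborn (deviate z i a) = stubborn z :\ i.
Proof.
move=> a1; apply/setP => k; rewrite !inE /deviate.
by have [->|//] := eqVneq k i; rewrite (negbTE a1).
Qed.

Lemma cost_unit_row z i b : (forall j, Hmat P z i j = (b == j)%:R) -> cost P s2 z i = s2 b.
Proof.
move=> Hi; rewrite /cost -[RHS](sumr_delta_l s2 b); apply: eq_bigr => j _.
by rewrite Hi; case: (b == j); rewrite ?expr1n ?expr0n.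
Qed.

Lemma cost_stubborn z i : z i = 1 -> cost P s2 z i = s2 i.
Proof. by move=> zi; apply: cost_unit_row => j; exact: Hmat_stubborn_row. Qed.

Lemma cost_single_stubborn z b i :
  profile z -> stubborn z = [set b]%SET -> cost P s2 z i = s2 b.
Proof.
move=> z01 Sb; have zj1 j : (z j == 1) = (j == b) by move/setP/(_ j): Sb; rewrite !inE.
have zb : z b = 1 by apply/eqP; rewrite zj1.
have H0 j : j != b -> Hmat P z i j = 0.
  by move=> jb; apply: (Hmat_nonstubborn_col P_st P_irr z01 zb); rewrite zj1.
apply: cost_unit_row => j; have [<-|bj] := eqVneq b j; last by rewrite H0 // eq_sym.
rewrite -(proj2 (row_stochastic_Hmat P_st P_irr z01 zb) i) (bigD1 b) //=.
by rewrite big1 ?addr0 // => k; exact: H0.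
Qed.

Lemma cost_le {z s0 i c} : profile z -> z s0 = 1 -> (forall j, 0 <= s2 j) ->
  (forall j, z j = 1 -> s2 j <= c) -> cost P s2 z i <= c.
Proof.
move=> z01 zs0 s2_ge0 s2_le.
have H_st := row_stochastic_Hmat P_st P_irr z01 zs0.
rewrite /cost -[c]mul1r -(proj2 H_st i) mulr_suml; apply: ler_sum => j _.
have [zj|zj] := eqVneq (z j) 1; last first.
  by rewrite (Hmat_nonstubborn_col P_st P_irr z01 zs0) // expr0n /= !mul0r.
rewrite expr2 -mulrA ler_wpM2l //; first exact: (proj1 H_st).
apply: le_trans (s2_le j zj); rewrite ler_piMl //.
exact: row_stochastic_le1.
Qed.

Lemma cost_deviate_pair {z i b a} : profile z -> stubborn z = [set i; b]%SET -> i != b ->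
  in01 a -> a != 1 -> cost P s2 (deviate z i a) i = s2 b.
Proof.
move=> z01 Sib ib a01 a1; apply: cost_single_stubborn; first exact: profile_deviate.
by rewrite stubborn_deviate // Sib setU1K // inE.
Qed.

Lemma cost_deviate_nonstubborn {z s0 i a} : profile z -> z s0 = 1 -> z i != 1 ->
  in01 a -> a != 1 -> cost P s2 (deviate z i a) i = cost P s2 z i.
Proof.
move=> z01 zs0 zi a01 a1; rewrite /cost (Hmat_stubborn_eq P_st P_irr z01 _ zs0) //.
  exact: profile_deviate.
apply/setP => k; rewrite stubborn_deviate // !inE.
by have [->|] := eqVneq k i; rewrite ?(negbTE zi).
Qed.

End Costs.

Theorem proposition6 (R : realType) (n : nat) (P : 'M[R]_n) (s2 : 'I_n -> R)
  (z : 'I_n -> R) :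
  (2 <= n)%N ->
  row_stochastic P -> irreducible P -> aperiodic P ->
  (forall i, 0 < s2 i) ->
  profile z ->
  #|stubborn z| = 2%N ->
  (forall j i, j \in stubborn z -> s2 j <= s2 i) ->
  nash P s2 z /\ ~ strict_nash P s2 z.
Proof.
move=> _ P_st P_irr _ s2_gt0 z01 S2 s2_min.
have s2_ge0 j : 0 <= s2 j by exact: ltW.
have /cards2P[x [y [xy Sxy]]] : #|stubborn z| == 2 by rewrite S2.
have xS : x \in stubborn z by rewrite Sxy set21.
have stubbornE j : j \in stubborn z -> z j = 1 by rewrite inE => /eqP.
have partner i : i \in stubborn z -> exists2 b, stubborn z = [set i; b]%SET & i != b.
  rewrite Sxy !inE => /orP[/eqP->|/eqP->]; first by exists y.
  by exists x; [rewrite finset.setUC | rewrite eq_sym].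
split.
  split=> // i a a01; have [->|a1] := eqVneq a 1.
    rewrite [leRHS]cost_stubborn; last by rewrite /deviate eqxx.
    by apply: (cost_le P_st P_irr z01 (stubbornE x xS)) => // j zj; apply/s2_min; rewrite inE zj.
  have [iS|iNS] := boolP (i \in stubborn z).
    have [b Sib ib] := partner i iS.
    rewrite (cost_deviate_pair P_st P_irr z01 Sib ib a01 a1) cost_stubborn ?stubbornE //.
    exact: s2_min.
  by rewrite (cost_deviate_nonstubborn P_st P_irr z01 (stubbornE x xS)) //; move: iNS; rewrite inE.
case=> _ strict; have [b Sxb xb] := partner x xS.
have a01 : in01 (0 : R) by split; rewrite ?ler01.
have a1 : (0 : R) != 1 by rewrite eq_sym oner_eq0.
have := strict x 0 a01; rewrite stubbornE // => /(_ a1).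
rewrite (cost_deviate_pair P_st P_irr z01 Sxb xb a01 a1) cost_stubborn ?stubbornE // ltNge.
by rewrite s2_min // Sxb set22.
Qed.
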